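(* Let $n\ge1$ and $0\le k<n$. Then: (a) $|\mathbf{I}_{n,k}(001)|=|\mathbf{I}_{n-1}(001)|-\sum_{j<k}|\mathbf{I}_{n-2,j}(001)|$. (b) $|\mathbf{I}_{n,k}(010)|=|\mathbf{I}_{n-1}(010)|-(n-2-k)\,|\mathbf{I}_{n-2,k}(010)|$. (c) For $k<n-1$, $|\mathbf{I}_{n,k}(011)|=|\mathbf{I}_{n-1}(011)|-\sum_{j<k}|\mathbf{I}_{n-2,j}(011)|$, and $|\mathbf{I}_{n,n-1}(011)|=|\mathbf{I}_{n-1}(011)|$. (d) $|\mathbf{I}_{n,k}(101)|=|\mathbf{I}_{n-1}(101)|-k\,|\mathbf{I}_{n-2,k}(101)|$.
   Context: An inversion sequence of length $n$ is an integer sequence $e=e_1\dots e_n$ with $0\le e_i<i$ for all $i$; $\mathbf{I}_n$ denotes the set of these. The reduction of an integer word replaces every occurrence of its $i$-th smallest distinct value by $i-1$. $e$ contains the consecutive pattern $p$ of length 3 if some $e_ie_{i+1}e_{i+2}$ has reduction $p$, and avoids it otherwise; $\mathbf{I}_n(p)$ is the set of $e\in\mathbf{I}_n$ avoiding $p$. $\mathbf{I}_{n,k}(p)=\{e\in\mathbf{I}_n(p):e_n=k\}$, empty for $k\ge n$. Conventions: $|\mathbf{I}_0(p)|=1$ and $|\mathbf{I}_{m,j}(p)|=0$ for $m\le0$; empty sums are $0$. *)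

From mathcomp Require Import all_boot all_order all_algebra.
Set Implicit Arguments. Unset Strict Implicit. Unset Printing Implicit Defensive.

(* An inversion sequence e_1..e_n (0-indexed here: position i, value <= i). *)
Definition is_invseq (s : seq nat) : bool :=
  all (fun i => nth 0 s i <= i) (iota 0 (size s)).

Definition reduction (w : seq nat) : seq nat :=
  map (fun x => index x (sort leq (undup w))) w.

Definition contains3 (p s : seq nat) : bool :=
  has (fun i => reduction (take 3 (drop i s)) == p) (iota 0 (size s - 2)).

Definition avoids3 (p s : seq nat) : bool := ~~ contains3 p s.

Definition tval (n : nat) (e : n.-tuple 'I_n) : seq nat := map val e.

Definition cntI (p : seq nat) (n : nat) : nat :=
  #|[set e : n.-tuple 'I_n | is_invseq (tval e) && avoids3 p (tval e)]|.

(* |I_{n,k}(p)|, with the convention |I_{m,j}(p)| = 0 for m <= 0 *)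
Definition cntIk (p : seq nat) (n k : nat) : nat :=
  if n is 0 then 0 else
  #|[set e : n.-tuple 'I_n | [&& is_invseq (tval e), avoids3 p (tval e)
                              & nth 0 (tval e) n.-1 == k]]|.

From Pilot Require Import Defs.
From mathcomp Require Import all_boot all_order all_algebra.
From mathcomp Require Import zify.
Import GRing.Theory Num.Theory.

Set Implicit Arguments.
Unset Strict Implicit.
Unset Printing Implicit Defensive.

(* Let p be a consecutive pattern and k <= m.  Deleting the last entry of an
   e in I_{m+1,k}(p) gives a p-avoiding t in I_m that k does not "close",
   i.e. such that (t_{m-1}, t_m, k) does not reduce to p; hence
     |I_{m+1,k}(p)| = |I_m(p)| - #{t in I_m(p) closed by k}     [last_removal].
   The four patterns 001, 010, 011, 101 are shift-free: two occurrences
   cannot share two consecutive letters.  So writing t = u ++ [y], t avoids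
   p exactly when u does, and the closed t are counted by summing, over
   u in I_{m-1}(p), the number of letters y <= m - 1 such that
   (last u, y, k) reduces to p  [nb_closing_shift_free].  Characterising
   each pattern by comparisons of its letters turns this count into
   sum_{j<k} |I_{m-1,j}|, (m-1-k) |I_{m-1,k}|, [k<m] sum_{j<k} |I_{m-1,j}|
   and k |I_{m-1,k}| respectively, which is the theorem. *)

Lemma index_sorted_ltn (s : seq nat) (x : nat) : sorted ltn s -> x \in s ->
  index x s = count (fun y => y < x) s.
Proof.
elim: s => [|y s IH] //= s_sorted; rewrite inE.
have y_min : all (fun z => y < z) s by apply: (order_path_min ltn_trans).
case: eqVneq => [->|x_neq_y] /= x_in.
  rewrite ltnn add0n; apply/esym/eqP; rewrite -(count_pred0 s).
  by apply/eqP/eq_in_count => z /(allP y_min) /=; lia.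
rewrite IH ?(path_sorted s_sorted) //.
by have := allP y_min x x_in; lia.
Qed.

Lemma reduction_rank (w : seq nat) :
  reduction w = map (fun x => count (fun y => y < x) (undup w)) w.
Proof.
apply/eq_in_map => x x_in_w.
have sorted_ltn : sorted ltn (sort leq (undup w)).
  by rewrite ltn_sorted_uniq_leq sort_uniq undup_uniq sort_sorted //; apply: leq_total.
rewrite index_sorted_ltn // ?mem_sort ?mem_undup //.
by apply/permP; rewrite perm_sort.
Qed.

Lemma reduction_001 (a b c : nat) :
  (reduction [:: a; b; c] == [:: 0; 0; 1]) = (a == b) && (b < c).
Proof.
by rewrite reduction_rank /= !inE; repeat case: ifP => /=;
  rewrite !eqseq_cons eqxx andbT; lia.
Qed.

Lemma reduction_010 (a b c : nat) :
  (reduction [:: a; b; c] == [:: 0; 1; 0]) = (a == c) && (a < b).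
Proof.
by rewrite reduction_rank /= !inE; repeat case: ifP => /=;
  rewrite !eqseq_cons eqxx andbT; lia.
Qed.

Lemma reduction_011 (a b c : nat) :
  (reduction [:: a; b; c] == [:: 0; 1; 1]) = (a < b) && (b == c).
Proof.
by rewrite reduction_rank /= !inE; repeat case: ifP => /=;
  rewrite !eqseq_cons eqxx andbT; lia.
Qed.

Lemma reduction_101 (a b c : nat) :
  (reduction [:: a; b; c] == [:: 1; 0; 1]) = (a == c) && (b < a).
Proof.
by rewrite reduction_rank /= !inE; repeat case: ifP => /=;
  rewrite !eqseq_cons eqxx andbT; lia.
Qed.

Definition shift_free (p : seq nat) : Prop :=
  forall a b c d, reduction [:: a; b; c] == p -> reduction [:: b; c; d] != p.

Lemma shift_free_001 : shift_free [:: 0; 0; 1].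
Proof. by move=> a b c d; rewrite !reduction_001; lia. Qed.

Lemma shift_free_010 : shift_free [:: 0; 1; 0].
Proof. by move=> a b c d; rewrite !reduction_010; lia. Qed.

Lemma shift_free_011 : shift_free [:: 0; 1; 1].
Proof. by move=> a b c d; rewrite !reduction_011; lia. Qed.

Lemma shift_free_101 : shift_free [:: 1; 0; 1].
Proof. by move=> a b c d; rewrite !reduction_101; lia. Qed.

Fixpoint invseqs (n : nat) : seq (seq nat) :=
  if n is m.+1 then [seq rcons s x | s <- invseqs m, x <- iota 0 n] else [:: [::]].

Lemma is_invseq_rcons (s : seq nat) (x : nat) :
  is_invseq (rcons s x) = is_invseq s && (x <= size s).
Proof.
rewrite /is_invseq size_rcons -addn1 iotaD all_cat /= andbT add0n.
rewrite nth_rcons ltnn eqxx; congr andb.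
apply: eq_in_all => i; rewrite mem_iota add0n => /andP [_ i_lt].
by rewrite nth_rcons i_lt.
Qed.

Lemma mem_invseqs (n : nat) (s : seq nat) :
  (s \in invseqs n) = (size s == n) && is_invseq s.
Proof.
elim: n s => [|n IH] s; first by case: s.
case/lastP: s => [|t x].
  apply/negbTE/negP => /allpairsP [[t' x'] /= [_ _ /(congr1 size)]].
  by rewrite size_rcons.
rewrite size_rcons is_invseq_rcons eqSS; apply/allpairsP/idP.
  move=> [[t' x'] [t'_in x'_in /rcons_inj [-> ->]]].
  by move: t'_in x'_in; rewrite IH mem_iota => /andP [/eqP -> ->] /=; lia.
move=> /and3P [/eqP size_t t_inv x_le]; exists (t, x); split => //.
  by rewrite IH size_t eqxx.
by rewrite mem_iota /= -size_t; lia.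
Qed.

Lemma invseqs_uniq (n : nat) : uniq (invseqs n).
Proof.
elim: n => [|n IH] //.
apply: allpairs_uniq => //; first exact: iota_uniq.
by move=> [s1 x1] [s2 x2] _ _ /= /rcons_inj [-> ->].
Qed.

Lemma big_invseqsS (n : nat) (F : seq nat -> nat) :
  \sum_(s <- invseqs n.+1) F s =
  \sum_(t <- invseqs n) \sum_(x <- iota 0 n.+1) F (rcons t x).
Proof. exact: big_allpairs_dep. Qed.

Lemma last_invseqs (n : nat) (t : seq nat) : t \in invseqs n.+1 -> last 0 t <= n.
Proof.
rewrite mem_invseqs => /andP [/eqP size_t /allP /(_ n)].
by rewrite -nth_last size_t mem_iota /= => ->.
Qed.

Lemma tval_inj (n : nat) : injective (@Defs.tval n).
Proof. by move=> e1 e2 /(inj_map val_inj) /val_inj. Qed.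

Lemma tval_invseq (n : nat) (s : seq nat) :
  size s = n -> is_invseq s -> exists e : n.-tuple 'I_n, Defs.tval e = s.
Proof.
move=> size_s s_inv.
have s_lt : all (fun x => x < n) s.
  apply/allP => x /(nthP 0) [i i_lt <-].
  move/allP: s_inv => /(_ i); rewrite mem_iota i_lt => /(_ isT) le_i.
  by apply: leq_ltn_trans le_i _; rewrite -size_s.
have size_ok : size (pmap (insub : nat -> option 'I_n) s) == n.
  by move: s_lt; rewrite size_pmap_sub all_count size_s.
exists (Tuple size_ok); rewrite /Defs.tval /= (pmap_filter (@insubK _ _ _)).
rewrite -[RHS](all_filterP s_lt); apply: eq_filter => x /=.
by case: insubP => [u -> _|/negbTE ->].
Qed.

Lemma card_invseq_tuples (n : nat) (P : pred (seq nat)) :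
  #|[set e : n.-tuple 'I_n | is_invseq (Defs.tval e) && P (Defs.tval e)]| =
  count P (invseqs n).
Proof.
rewrite cardE -size_filter -(size_map (@Defs.tval n)); apply: perm_size.
apply: uniq_perm; first by rewrite map_inj_uniq ?enum_uniq //; apply: tval_inj.
  by rewrite filter_uniq // invseqs_uniq.
move=> s; rewrite mem_filter mem_invseqs; apply/mapP/idP.
  move=> [e]; rewrite mem_enum inE => /andP [e_inv Pe] ->.
  by rewrite Pe e_inv /Defs.tval size_map size_tuple eqxx.
move=> /and3P [Ps /eqP size_s s_inv]; have [e e_s] := tval_invseq size_s s_inv.
by exists e; rewrite // mem_enum inE e_s s_inv Ps.
Qed.

Definition closes (p s : seq nat) (k : nat) : bool :=
  (1 < size s) && (reduction (rcons (drop (size s - 2) s) k) == p).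

Lemma avoids3_rcons (p s : seq nat) (k : nat) :
  avoids3 p (rcons s k) = avoids3 p s && ~~ closes p s k.
Proof.
rewrite /avoids3 /contains3 /closes size_rcons -negb_or; congr negb.
case: (ltnP 1 (size s)) => size_s /=; last first.
  have -> : (size s).+1 - 2 = 0 by lia.
  by have -> : size s - 2 = 0 by lia.
have -> : (size s).+1 - 2 = (size s - 2) + 1 by lia.
rewrite iotaD add0n has_cat /= orbF drop_rcons; last lia.
rewrite take_oversize ?size_rcons ?size_drop; last lia.
congr orb; apply: eq_in_has => i; rewrite mem_iota add0n => /andP [_ i_lt].
rewrite drop_rcons; last lia.
by rewrite -cats1 takel_cat // size_drop; lia.
Qed.

Lemma closes_short (p s : seq nat) (k : nat) : size s <= 1 -> closes p s k = false.
Proof. by rewrite /closes leqNgt => /negbTE ->. Qed.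

Lemma closes_rcons2 (p u : seq nat) (a y k : nat) :
  closes p (rcons (rcons u a) y) k = (reduction [:: a; y; k] == p).
Proof.
rewrite /closes !size_rcons /=.
have -> : (size u).+2 - 2 = size u by lia.
by rewrite -!cats1 -catA drop_size_cat.
Qed.

Lemma sum_nat_of_bool (T : Type) (P : pred T) (r : seq T) :
  \sum_(x <- r) (P x : nat) = count P r.
Proof. by elim: r => [|x r IH]; rewrite ?big_nil ?big_cons //= IH. Qed.

Lemma sum_iota_pick (N k : nat) (P : pred nat) :
  \sum_(x <- iota 0 N) ((x == k) && P x) = (k < N) && P k.
Proof.
elim: N => [|N IH]; first by rewrite big_nil.
rewrite -addn1 iotaD big_cat big_seq1 /= IH add0n.
by case: (ltngtP k N) => [k_lt|k_gt|->]; rewrite ?eqxx /=; lia.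
Qed.

Lemma sum_iota_lt (N a : nat) : a <= N -> \sum_(x <- iota 0 N) (x < a) = a.
Proof.
by move=> a_le; rewrite sum_nat_of_bool -size_filter (filter_iota_ltn 0) ?size_iota.
Qed.

Lemma sum_iota_gt (N a : nat) : a < N -> \sum_(x <- iota 0 N) (a < x) = N - a.+1.
Proof.
move=> a_lt; rewrite sum_nat_of_bool.
have le_a : count (fun x => x <= a) (iota 0 N) = a.+1.
  by rewrite -size_filter (filter_iota_leq 0) // size_iota.
rewrite -[N in RHS](size_iota 0) -(count_predC (fun x => x <= a)) le_a addKn.
by apply: eq_count => x; rewrite /= -ltnNge.
Qed.

Lemma cntI_sum (p : seq nat) (n : nat) :
  cntI p n = \sum_(s <- invseqs n) (avoids3 p s : nat).
Proof. by rewrite /cntI card_invseq_tuples sum_nat_of_bool. Qed.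

Lemma cntIk_sum (p : seq nat) (n k : nat) :
  cntIk p n.+1 k = \sum_(s <- invseqs n.+1) (avoids3 p s && (last 0 s == k) : nat).
Proof.
rewrite /cntIk sum_nat_of_bool -card_invseq_tuples; apply: eq_card => e.
by rewrite !inE -nth_last /Defs.tval size_map size_tuple.
Qed.

Lemma cntIk_large (p : seq nat) (n k : nat) : n <= k -> cntIk p n k = 0.
Proof.
case: n => [//|n] k_ge; rewrite cntIk_sum big_seq big1 // => s s_in.
by rewrite (@negbTE (last 0 s == k)) ?andbF //; have := last_invseqs s_in; lia.
Qed.

Definition nb_closing (p : seq nat) (m k : nat) : nat :=
  \sum_(s <- invseqs m) (avoids3 p s && closes p s k : nat).

Lemma last_removal (p : seq nat) (m k : nat) :
  k <= m -> cntIk p m.+1 k + nb_closing p m k = cntI p m.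
Proof.
move=> k_le; rewrite cntIk_sum cntI_sum /nb_closing big_invseqsS -big_split.
apply: eq_bigr => t _.
under eq_bigr => x _ do rewrite last_rcons andbC.
rewrite (sum_iota_pick _ _ (fun x => avoids3 p (rcons t x))) ltnS k_le /=.
by rewrite avoids3_rcons; case: (avoids3 p t); case: (closes p t k).
Qed.

Lemma nb_closing_small (p : seq nat) (m k : nat) : m <= 1 -> nb_closing p m k = 0.
Proof.
move=> m_le; rewrite /nb_closing big_seq big1 // => s.
by rewrite mem_invseqs => /andP [/eqP size_s _]; rewrite closes_short ?andbF ?size_s.
Qed.

Lemma nb_closing_shift_free (p : seq nat) (m k : nat) : shift_free p ->
  nb_closing p m.+2 k =
  \sum_(t <- invseqs m.+1)
     avoids3 p t * \sum_(y <- iota 0 m.+2) (reduction [:: last 0 t; y; k] == p).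
Proof.
move=> p_free; rewrite /nb_closing big_invseqsS big_seq [RHS]big_seq.
apply: eq_bigr => t; rewrite mem_invseqs => /andP [/eqP size_t _].
rewrite big_distrr /=; apply: eq_bigr => y _.
case/lastP: t size_t => [//|u a] size_u.
rewrite closes_rcons2 avoids3_rcons last_rcons.
case/lastP: u size_u => [|w z] _; first by rewrite closes_short // andbT mulnb.
rewrite closes_rcons2; case zay : (reduction [:: z; a; y] == p).
  by rewrite (negbTE (p_free _ _ _ k zay)) andbF muln0.
by rewrite andbT mulnb.
Qed.

Lemma sum_last_lt (p : seq nat) (m k : nat) :
  \sum_(t <- invseqs m.+1) avoids3 p t * (last 0 t < k) = \sum_(j < k) cntIk p m.+1 j.
Proof.
under [RHS]eq_bigr => j _ do rewrite cntIk_sum.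
rewrite exchange_big /=; apply: eq_bigr => t _.
rewrite -(big_mkord xpredT (fun j => (avoids3 p t && (last 0 t == j) : nat))).
under eq_bigr => j _ do rewrite eq_sym andbC.
by rewrite /index_iota subn0 (sum_iota_pick _ _ (fun=> avoids3 p t)) mulnb andbC.
Qed.

Lemma sum_last_eq (p : seq nat) (m k c : nat) :
  \sum_(t <- invseqs m.+1) avoids3 p t * ((last 0 t == k) * c) = c * cntIk p m.+1 k.
Proof.
rewrite cntIk_sum big_distrr; apply: eq_bigr => t _.
by rewrite mulnA mulnb mulnC.
Qed.

(* Pattern 001: [t] is closed by [y, k] iff y = last t < k, so exactly the
   [t] ending below [k] contribute, each with one choice of [y]. *)
Lemma nb_closing_001 (m k : nat) :
  nb_closing [:: 0; 0; 1] m k = \sum_(j < k) cntIk [:: 0; 0; 1] m.-1 j.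
Proof.
case: m => [|[|m]]; try by rewrite nb_closing_small // big1.
rewrite nb_closing_shift_free ?[_.-1]/=; last exact: shift_free_001.
rewrite -sum_last_lt big_seq [RHS]big_seq; apply: eq_bigr => t t_in; congr muln.
under eq_bigr => y _ do rewrite reduction_001 eq_sym.
by rewrite sum_iota_pick; have := last_invseqs t_in; lia.
Qed.

(* Pattern 010: [t] must end with [k], and then any y in (k, m - 1] works. *)
Lemma nb_closing_010 (m k : nat) :
  nb_closing [:: 0; 1; 0] m k = (m.-1 - k) * cntIk [:: 0; 1; 0] m.-1 k.
Proof.
case: m => [|[|m]]; try by rewrite nb_closing_small // muln0.
rewrite nb_closing_shift_free ?[_.-1]/=; last exact: shift_free_010.
rewrite -sum_last_eq big_seq [RHS]big_seq; apply: eq_bigr => t t_in; congr muln.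
under eq_bigr => y _ do rewrite reduction_010 -mulnb.
have last_le := last_invseqs t_in.
rewrite -big_distrr sum_iota_gt; last lia.
by case: eqVneq => [->|_]; rewrite ?subSS.
Qed.

(* Pattern 011: the new letter must be y = k, which is admissible only for
   k < m, and [t] must end below [k]. *)
Lemma nb_closing_011 (m k : nat) :
  nb_closing [:: 0; 1; 1] m k = (k < m) * \sum_(j < k) cntIk [:: 0; 1; 1] m.-1 j.
Proof.
case: m => [|[|m]]; try by rewrite nb_closing_small // big1 ?muln0.
rewrite nb_closing_shift_free ?[_.-1]/=; last exact: shift_free_011.
rewrite -sum_last_lt big_distrr; apply: eq_bigr => t _.
under eq_bigr => y _ do rewrite reduction_011 andbC.
by rewrite sum_iota_pick -mulnb mulnCA.
Qed.

(* Pattern 101: [t] must end with [k], and then any y < k works. *)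
Lemma nb_closing_101 (m k : nat) :
  nb_closing [:: 1; 0; 1] m k = k * cntIk [:: 1; 0; 1] m.-1 k.
Proof.
case: m => [|[|m]]; try by rewrite nb_closing_small // muln0.
rewrite nb_closing_shift_free ?[_.-1]/=; last exact: shift_free_101.
rewrite -sum_last_eq big_seq [RHS]big_seq; apply: eq_bigr => t t_in; congr muln.
under eq_bigr => y _ do rewrite reduction_101 -mulnb.
have last_le := last_invseqs t_in.
by rewrite -big_distrr; case: eqVneq => [<-|_]; rewrite ?sum_iota_lt //; lia.
Qed.

Local Open Scope ring_scope.

Lemma Posz_sum (k : nat) (F : nat -> nat) :
  (\sum_(j < k) F j)%N%:Z = \sum_(j < k) (F j)%:Z.
Proof. exact: (big_morph Posz PoszD (erefl 0%:Z)). Qed.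

Theorem mainTheorem16 (n k : nat) (hn : (1 <= n)%N) (hk : (k < n)%N) :
  [/\ (cntIk [:: 0; 0; 1]%N n k)%:Z =
        (cntI [:: 0; 0; 1]%N n.-1)%:Z
        - \sum_(j < k) (cntIk [:: 0; 0; 1]%N n.-2 j)%:Z,
      (cntIk [:: 0; 1; 0]%N n k)%:Z =
        (cntI [:: 0; 1; 0]%N n.-1)%:Z
        - (n%:Z - 2 - k%:Z) * (cntIk [:: 0; 1; 0]%N n.-2 k)%:Z,
      ((k < n.-1)%N ->
        (cntIk [:: 0; 1; 1]%N n k)%:Z =
        (cntI [:: 0; 1; 1]%N n.-1)%:Z
        - \sum_(j < k) (cntIk [:: 0; 1; 1]%N n.-2 j)%:Z)
      /\ cntIk [:: 0; 1; 1]%N n n.-1 = cntI [:: 0; 1; 1]%N n.-1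
    & (cntIk [:: 1; 0; 1]%N n k)%:Z =
        (cntI [:: 1; 0; 1]%N n.-1)%:Z
        - k%:Z * (cntIk [:: 1; 0; 1]%N n.-2 k)%:Z].
Proof.
case: n hn hk => [|m] // _; rewrite ltnS [m.+1.-1]/= [m.+1.-2]/= => k_le.
split.
- by rewrite -(last_removal _ k_le) nb_closing_001 PoszD Posz_sum addrK.
- rewrite -(last_removal _ k_le) nb_closing_010 PoszD PoszM.
  have [k_lt|k_ge] := ltnP k m.
    have -> : m.+1%:Z - 2 - k%:Z = (m.-1 - k)%N by lia.
    by rewrite addrK.
  by rewrite (@cntIk_large _ m.-1 k) ?mulr0 ?subr0 ?addr0 //; lia.
- split => [k_lt|].
    by rewrite -(last_removal _ k_le) nb_closing_011 k_lt mul1n PoszD Posz_sum addrK.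
  by rewrite -(last_removal _ (leqnn m)) nb_closing_011 ltnn mul0n addn0.
- by rewrite -(last_removal _ k_le) nb_closing_101 PoszD PoszM addrK.
Qed.
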